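(* Let $q=2p$ with $p$ an odd prime. Consider the map $\mathcal S$ sending a pair of integers $(q_1,q_2)$ with $q_1,q_2,q_1+q_2,q_1-q_2$ all $\not\equiv0\pmod q$ to $\mathcal S(q_1,q_2)=(\psi(q_1,q_2),\alpha(q_1,q_2),\beta(q_1,q_2))$. Then $\mathcal S$ takes at most $6$ distinct values.
   Context: Let $\gamma=e^{2\pi i/q}$. Let $A$ be the set of residues in $\{1,\dots,q-1\}$ coprime to $q$, $B=\{2,4,\dots,2(p-1)\}$ and $C=\{p\}$. For $S\subset\{1,\dots,q-1\}$ put $\Pi_S(q_1,q_2)(z)=\sum_{l\in S}\prod_{i=1}^{2}(z-\gamma^{q_il})(z-\gamma^{-q_il})$; then $\psi=\Pi_A$, $\alpha=\Pi_B$, $\beta=\Pi_C$. *)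

From HB Require Import structures.
From mathcomp Require Import all_boot all_order all_algebra all_field.
Set Implicit Arguments. Unset Strict Implicit. Unset Printing Implicit Defensive.
Import Order.TTheory GRing.Theory Num.Theory.
Local Open Scope ring_scope.

(* gamma = exp(2 pi i / q) with q = 2p, i.e. exp(i pi / p): the principal
   p-th root of -1 in algC (minimal nonnegative argument). *)
Definition gam (p : nat) : algC := p.-root (-1).

Definition PiS (p : nat) (S : seq nat) (q1 q2 : int) : {poly algC} :=
  \sum_(l <- S) \prod_(qi <- [:: q1; q2])
     (('X - (gam p ^ (qi * l%:Z))%:P) * ('X - (gam p ^ (- (qi * l%:Z)))%:P)).

Definition setA (p : nat) : seq nat := [seq l <- iota 1 (2 * p - 1) | coprime l (2 * p)].
Definition setB (p : nat) : seq nat := [seq (2 * k)%N | k <- iota 1 (p - 1)].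
Definition setC (p : nat) : seq nat := [:: p].

Definition psi p q1 q2 := PiS p (setA p) q1 q2.
Definition alpha p q1 q2 := PiS p (setB p) q1 q2.
Definition beta p q1 q2 := PiS p (setC p) q1 q2.

Definition Smap (p : nat) (q1 q2 : int) : {poly algC} * {poly algC} * {poly algC} :=
  (psi p q1 q2, alpha p q1 q2, beta p q1 q2).

From Pilot Require Import Defs.
From HB Require Import structures.
From mathcomp Require Import all_boot all_order all_algebra all_field.
From mathcomp Require Import ring.
Import Order.TTheory GRing.Theory Num.Theory.
Local Open Scope ring_scope.

(* Write Y = z^2 + 1 and C(m) = gamma^m + gamma^-m.  Each factor pair of Pi_S
   is (z - a)(z - a^-1) = Y - (a + a^-1) z, and C(m) C(n) = C(m + n) + C(m - n),
   so Pi_S(q1, q2) = |S| Y^2 - (T(q1) + T(q2)) z Y + (T(q1 + q2) + T(q1 - q2)) z^2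
   with T(m) = sum_{l in S} C(m l)  (PiS_quadPi).
   Since gamma is a primitive 2p-th root of unity, for m not divisible by 2p the
   power sums sum_{l in S} (gamma^m)^l over S = A, B, C are geometric sums whose
   value only depends on the class of m, i.e. on whether 2 | m and whether p | m
   (gam_sum_setA/B/C); hence S(q1, q2) only depends on the classes of q1, q2,
   q1 + q2, q1 - q2, and symmetrically in each pair (Smap_cls, Sval_swaps).
   Parity and divisibility by p constrain these four classes to six patterns up
   to symmetry (cls4_pattern), which gives the six values. *)

(* An element w with w ^+ p = -1, p a prime, w <> -1, in a domain of
   characteristic <> 2 is a primitive 2p-th root of unity: its order divides
   2p but divides neither p (w ^+ p <> 1) nor 2 (w <> 1, w <> -1). *)
Lemma prim_root_of_exprN1 (R : idomainType) (p : nat) (w : R) :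
  prime p -> (-1 : R) != 1 -> w ^+ p = -1 -> w != -1 ->
  (2 * p)%N.-primitive_root w.
Proof.
move=> pr_p N1_neq1 wp wN1; have p_gt0 := prime_gt0 pr_p.
have w2p : w ^+ (2 * p) = 1 by rewrite mulnC exprM wp sqrrN expr1n.
have [m prim_m m_dvd] :=
  prim_order_exists (n := (2 * p)%N) (ltac:(by rewrite muln_gt0 p_gt0)) w2p.
have m_ndvd_p : ~~ (m %| p)%N by rewrite (prim_order_dvd prim_m) wp.
have m_ndvd_2 : ~~ (m %| 2)%N.
  rewrite (prim_order_dvd prim_m) sqrf_eq1 (negPf wN1) orbF.
  by apply: contraNneq N1_neq1 => w1; rewrite -wp w1 expr1n.
have p_dvd_m : (p %| m)%N.
  apply: contraR m_ndvd_2 => p_ndvd_m.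
  by rewrite -(@Gauss_dvdl _ _ p) 1?coprime_sym ?prime_coprime.
have [k def_m] := dvdnP p_dvd_m; move: m_dvd m_ndvd_p prim_m.
rewrite def_m dvdn_pmul2r // => k_dvd_2.
have [->|k_ne2] := eqVneq k 2; first by rewrite mulnC.
suff -> : k = 1%N by rewrite mul1n dvdnn.
by case: k k_dvd_2 k_ne2 {def_m} => [|[|[|k]]].
Qed.

Lemma prim_exprz_eq1 (R : unitRingType) (n : nat) (w : R) (z : int) :
  n.-primitive_root w -> (w ^ z == 1) = (n%:Z %| z)%Z.
Proof.
move=> prim_w; case: z => k; first by rewrite -exprnP dvdzE (prim_order_dvd prim_w).
by rewrite NegzE -invr_expz invr_eq1 -exprnP dvdzE abszN (prim_order_dvd prim_w).
Qed.

Lemma gam_exprp {p : nat} : (0 < p)%N -> gam p ^+ p = -1.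
Proof. by move=> p_gt0; rewrite /gam rootCK. Qed.

Lemma gam_neq0 {p : nat} : (0 < p)%N -> gam p != 0.
Proof.
move=> p_gt0; apply/eqP => g0; move: (gam_exprp p_gt0) => /eqP.
by rewrite g0 expr0n gtn_eqF // eq_sym oppr_eq0 oner_eq0.
Qed.

(* gamma = exp(i pi / p) is a primitive 2p-th root of unity (it is not -1,
   being the root of -1 with minimal nonnegative argument). *)
Lemma gam_prim (p : nat) : prime p -> (2 * p)%N.-primitive_root (gam p).
Proof.
move=> pr_p; apply: prim_root_of_exprN1 => //.
- by rewrite lt_eqF // (lt_trans (ltrN10 _) ltr01).
- exact/gam_exprp/prime_gt0.
apply/eqP => gN1; have := rootC_lt0 (-1 : algC) (prime_gt1 pr_p).
by rewrite -/(gam p) gN1 ltrN10.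
Qed.

Lemma gamz_eq1 (p : nat) (z : int) :
  prime p -> (gam p ^ z == 1) = ((2 * p)%:Z %| z)%Z.
Proof. by move=> pr_p; apply/prim_exprz_eq1/gam_prim. Qed.

Lemma geom_sum_root (R : idomainType) (w : R) (n : nat) :
  w ^+ n = 1 -> w != 1 -> \sum_(0 <= k < n) w ^+ k = 0.
Proof.
move=> wn w_ne1; apply/eqP; move: (subrX1 w n); rewrite wn subrr big_mkord.
by move/esym/eqP; rewrite mulf_eq0 subr_eq0 (negPf w_ne1).
Qed.

Lemma sum_odd_powers (R : pzSemiRingType) (u : R) (n : nat) :
  \sum_(0 <= l < 2 * n | odd l) u ^+ l = u * \sum_(0 <= j < n) (u ^+ 2) ^+ j.
Proof.
elim: n => [|n IH]; first by rewrite muln0 !big_geq // mulr0.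
rewrite big_mkcond mulnSr addn2 !big_nat_recr //= -big_mkcond IH.
by rewrite oddM /= addr0 mulrDr -exprM -exprS.
Qed.

Lemma coprime_double_prime (p l : nat) : prime p -> (l < 2 * p)%N ->
  coprime l (2 * p) = odd l && (l != p).
Proof.
move=> pr_p l_lt; rewrite coprimeMr coprime_sym coprime2n coprime_sym prime_coprime //.
have [->|l_ne_p] := eqVneq l p; first by rewrite dvdnn andbF.
rewrite andbT; case odd_l: (odd l) => //=; apply/negP => /dvdnP [k def_l].
move: l_lt l_ne_p odd_l; rewrite def_l ltn_pmul2r ?prime_gt0 //.
by case: k {def_l} => [|[|k]] //; rewrite mul1n eqxx.
Qed.

Lemma setA_odd (p : nat) : prime p ->
  setA p = [seq l <- iota 0 (2 * p) | odd l && (l != p)].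
Proof.
move=> pr_p; have def_2p : (2 * p = (2 * p - 1).+1)%N.
  by rewrite subn1 prednK // muln_gt0 (prime_gt0 pr_p).
rewrite /setA [in RHS]def_2p /=; apply: eq_in_filter => l.
rewrite mem_iota add1n -def_2p => /andP [_ l_lt].
exact: coprime_double_prime.
Qed.

Section RootSums.
Variables (R : idomainType) (p : nat) (u : R).
Hypothesis u_root : u ^+ (2 * p) = 1.

(* u ^+ p is a square root of 1, hence is 1 or -1. *)
Lemma exprp_sign : u ^+ p = if u ^+ p == 1 then 1 else -1.
Proof.
have : (u ^+ p) ^+ 2 == 1 by rewrite -exprM mulnC u_root.
by rewrite sqrf_eq1; case: eqP => //= _ /eqP.
Qed.

Lemma sum_setC : \sum_(l <- Defs.setC p) u ^+ l = if u ^+ p == 1 then 1 else -1.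
Proof. by rewrite big_seq1 -exprp_sign. Qed.

Lemma sum_setB : (0 < p)%N ->
  \sum_(l <- setB p) u ^+ l = if u ^+ 2 == 1 then (p - 1)%:R else -1.
Proof.
move=> p_gt0; rewrite big_map (eq_bigr _ (fun k _ => exprM u 2 k)).
have -> : iota 1 (p - 1) = index_iota 1 p by [].
have [u2_1|u2_ne1] := eqVneq (u ^+ 2) 1.
  by rewrite u2_1 (eq_bigr _ (fun k _ => expr1n _ k)) sumr_const_nat.
have geom := @geom_sum_root _ (u ^+ 2) p (ltac:(by rewrite -exprM)) u2_ne1.
rewrite big_ltn // expr0 in geom.
by apply/eqP; rewrite -addr_eq0 addrC geom.
Qed.

Lemma sum_setA : prime p -> odd p -> ~~ ((u ^+ 2 == 1) && (u ^+ p == 1)) ->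
  \sum_(l <- setA p) u ^+ l =
    if u ^+ 2 == 1 then 1 - p%:R else if u ^+ p == 1 then -1 else 1.
Proof.
move=> pr_p odd_p not_both.
have p_in : p \in [seq l <- iota 0 (2 * p) | odd l].
  by rewrite mem_filter odd_p mem_iota add0n ltn_Pmull ?prime_gt0.
have split_p : \sum_(l <- [seq l <- iota 0 (2 * p) | odd l]) u ^+ l =
                 u ^+ p + \sum_(l <- [seq l <- iota 0 (2 * p) | odd l] | l != p) u ^+ l.
  exact: bigD1_seq p_in (filter_uniq _ (iota_uniq 0 _)).
rewrite big_filter big_filter_cond in split_p.
rewrite setA_odd // big_filter.
have -> : \sum_(l <- iota 0 (2 * p) | odd l && (l != p)) u ^+ l =
          \sum_(0 <= l < 2 * p | odd l) u ^+ l - u ^+ p.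
  by rewrite /index_iota subn0 split_p addrC addKr.
rewrite sum_odd_powers; have [u2_1|u2_ne1] := eqVneq (u ^+ 2) 1.
  rewrite u2_1 (eq_bigr _ (fun k _ => expr1n _ k)) sumr_const_nat subn0.
  have up_eq_u : u ^+ p = u.
    by rewrite -(odd_double_half p) odd_p -mul2n exprS exprM u2_1 expr1n mulr1.
  rewrite u2_1 eqxx /= in not_both; rewrite exprp_sign (negPf not_both) in up_eq_u.
  by rewrite exprp_sign (negPf not_both) -up_eq_u mulN1r opprK addrC.
rewrite geom_sum_root ?mulr0 ?sub0r //; last by rewrite -exprM.
by rewrite [in LHS]exprp_sign; case: (u ^+ p == 1); rewrite ?opprK.
Qed.

End RootSums.

(* C(m) = w ^ m + w ^ -m, i.e. 2 cos(2 pi m / q) when w = gamma. *)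
Definition cosz {R : unitRingType} (w : R) (m : int) : R := w ^ m + w ^ (- m).

Lemma cosz_mul (R : comUnitRingType) (w : R) (m n : int) : w \is a GRing.unit ->
  cosz w m * cosz w n = cosz w (m + n) + cosz w (m - n).
Proof.
by move=> w_unit; rewrite /cosz opprD opprB !exprzDr //; ring.
Qed.

Lemma factor_pair (F : fieldType) (a : F) : a != 0 ->
  ('X - a%:P) * ('X - (a^-1)%:P) = 'X ^+ 2 + 1 - (a + a^-1)%:P * 'X.
Proof.
by move=> a_neq0; rewrite polyCD -[1](polyC1) -(mulfV a_neq0) polyCM; ring.
Qed.

Lemma factor_cosz (F : fieldType) (w : F) (m : int) : w != 0 ->
  ('X - (w ^ m)%:P) * ('X - (w ^ (- m))%:P) = 'X ^+ 2 + 1 - (cosz w m)%:P * 'X.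
Proof. by move=> w_neq0; rewrite /cosz -invr_expz factor_pair ?expfz_neq0. Qed.

Definition trace (p : nat) (S : seq nat) (m : int) : algC :=
  \sum_(l <- S) cosz (gam p) (m * l%:Z).

Definition quadPi (S : seq nat) (a b : algC) : {poly algC} :=
  \sum_(l <- S) ('X ^+ 2 + 1) ^+ 2 - a%:P * ('X * ('X ^+ 2 + 1)) + b%:P * 'X ^+ 2.

Lemma PiS_quadPi (p : nat) (S : seq nat) (q1 q2 : int) : (0 < p)%N ->
  PiS p S q1 q2 =
  quadPi S (trace p S q1 + trace p S q2) (trace p S (q1 + q2) + trace p S (q1 - q2)).
Proof.
move=> p_gt0; have g_neq0 := gam_neq0 p_gt0.
have g_unit : gam p \is a GRing.unit by rewrite unitfE.
rewrite /PiS /quadPi /trace -!big_split /= !rmorph_sum !mulr_suml -sumrB -big_split /=.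
apply: eq_bigr => l _; rewrite big_cons big_seq1 !factor_cosz //.
rewrite [(q1 + q2) * _]mulrDl [(q1 - q2) * _]mulrBl -cosz_mul //.
set c1 := cosz _ (q1 * _); set c2 := cosz _ (q2 * _).
by rewrite [(c1 + c2)%:P]polyCD polyCM; ring.
Qed.

Definition cls (p : nat) (m : int) : bool * bool := ((2 %| m)%Z, (p%:Z %| m)%Z).

Lemma cls_opp (p : nat) (m : int) : cls p (- m) = cls p m.
Proof. by rewrite /cls !rpredN. Qed.

Lemma cls_not_both {p : nat} {m : int} : odd p -> ~~ ((2 * p)%:Z %| m)%Z ->
  ~~ ((cls p m).1 && (cls p m).2).
Proof.
move=> odd_p; apply: contra; rewrite PoszM Gauss_dvdz //.
by rewrite coprimezE /= coprime2n.
Qed.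

Definition valA (p : nat) (c : bool * bool) : algC :=
  if c.2 then 1 - p%:R else if c.1 then -1 else 1.
Definition valB (p : nat) (c : bool * bool) : algC := if c.2 then (p - 1)%:R else -1.
Definition valC (c : bool * bool) : algC := if c.1 then 1 else -1.

Section GammaSums.
Variables (p : nat) (m : int).
Hypotheses (pr_p : prime p) (odd_p : odd p) (m_adm : ~~ ((2 * p)%:Z %| m)%Z).

Let u := gam p ^ m.

Let u_pow (k : nat) : (u ^+ k == 1) = ((2 * p)%:Z %| m * k%:Z)%Z.
Proof. by rewrite /u exprnP exprz_exp gamz_eq1. Qed.

Let u_root : u ^+ (2 * p) = 1.
Proof. by apply/eqP; rewrite u_pow dvdz_mull. Qed.

Let u_exprp : (u ^+ p == 1) = (cls p m).1.
Proof. by rewrite u_pow PoszM dvdz_mul2r // eqz_nat -lt0n prime_gt0. Qed.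

Let u_expr2 : (u ^+ 2 == 1) = (cls p m).2.
Proof. by rewrite u_pow mulnC PoszM dvdz_mul2r. Qed.

Lemma gam_sum_setA : \sum_(l <- setA p) u ^+ l = valA p (cls p m).
Proof.
rewrite sum_setA // ?u_expr2 ?u_exprp // andbC; exact: cls_not_both.
Qed.

Lemma gam_sum_setB : \sum_(l <- setB p) u ^+ l = valB p (cls p m).
Proof. by rewrite sum_setB ?prime_gt0 // u_expr2. Qed.

Lemma gam_sum_setC : \sum_(l <- Defs.setC p) u ^+ l = valC (cls p m).
Proof. by rewrite sum_setC // u_exprp. Qed.

End GammaSums.

(* If the power sums over S are given by a function f of the class, then so
   is T_S(m), since C(m l) = (gamma^m)^l + (gamma^-m)^l and m, -m have the
   same class. *)
Lemma trace_cls (p : nat) (S : seq nat) (f : bool * bool -> algC) (m : int) :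
  (forall m', ~~ ((2 * p)%:Z %| m')%Z ->
     \sum_(l <- S) (gam p ^ m') ^+ l = f (cls p m')) ->
  ~~ ((2 * p)%:Z %| m)%Z -> trace p S m = f (cls p m) *+ 2.
Proof.
move=> sumS m_adm; rewrite /trace /cosz big_split /= mulr2n.
rewrite -{2}(cls_opp p m) -!sumS ?rpredN //; congr (_ + _).
  by apply: eq_bigr => l _; rewrite exprnP exprz_exp.
by apply: eq_bigr => l _; rewrite exprnP exprz_exp mulNr.
Qed.

Definition class4 := (bool * bool * (bool * bool) * (bool * bool) * (bool * bool))%type.

Definition cls4 (p : nat) (q1 q2 : int) : class4 :=
  (cls p q1, cls p q2, cls p (q1 + q2), cls p (q1 - q2)).

Definition quadPi_cls (S : seq nat) (f : bool * bool -> algC) (t : class4) :=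
  let: (c1, c2, c3, c4) := t in
  quadPi S (f c1 *+ 2 + f c2 *+ 2) (f c3 *+ 2 + f c4 *+ 2).

Definition Sval (p : nat) (t : class4) :=
  (quadPi_cls (setA p) (valA p) t, quadPi_cls (setB p) (valB p) t,
   quadPi_cls (Defs.setC p) valC t).

Lemma Smap_cls (p : nat) (q1 q2 : int) : prime p -> odd p ->
  ~~ ((2 * p)%:Z %| q1)%Z -> ~~ ((2 * p)%:Z %| q2)%Z ->
  ~~ ((2 * p)%:Z %| q1 + q2)%Z -> ~~ ((2 * p)%:Z %| q1 - q2)%Z ->
  Smap p q1 q2 = Sval p (cls4 p q1 q2).
Proof.
move=> pr_p odd_p adm1 adm2 adm3 adm4.
have traceA m := @trace_cls p _ _ m (fun m' => gam_sum_setA p m' pr_p odd_p).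
have traceB m := @trace_cls p _ _ m (fun m' _ => gam_sum_setB p m' pr_p).
have traceC m := @trace_cls p _ _ m (fun m' _ => gam_sum_setC p m' pr_p).
by rewrite /Smap /psi /alpha /beta !PiS_quadPi ?prime_gt0 // !traceA // !traceB // !traceC.
Qed.

Definition swaps (t : class4) : seq class4 :=
  let: (c1, c2, c3, c4) := t in
  [:: (c1, c2, c3, c4); (c2, c1, c3, c4); (c1, c2, c4, c3); (c2, c1, c4, c3)].

Lemma quadPi_cls_swaps (S : seq nat) (f : bool * bool -> algC) {t t' : class4} :
  t' \in swaps t -> quadPi_cls S f t' = quadPi_cls S f t.
Proof.
case: t => [[[c1 c2] c3] c4]; rewrite !inE => /or4P [] /eqP -> //=.
- by rewrite [f c2 *+ 2 + _]addrC.
- by rewrite [f c4 *+ 2 + _]addrC.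
by rewrite [f c2 *+ 2 + _]addrC [f c4 *+ 2 + _]addrC.
Qed.

Lemma Sval_swaps (p : nat) {t t' : class4} : t' \in swaps t -> Sval p t' = Sval p t.
Proof. by move=> t'_in; rewrite /Sval !(quadPi_cls_swaps _ _ t'_in). Qed.

Lemma dvd2z_add (x y : int) : (2 %| x + y)%Z = ((2 %| x)%Z == (2 %| y)%Z).
Proof.
have even z : (2 %| z)%Z = ((z %% 2)%Z == 0) by apply/dvdz_mod0P/eqP.
have mod2 z : (z %% 2)%Z = 0 \/ (z %% 2)%Z = 1.
  have := @ltz_pmod z 2 isT; have := @modz_ge0 z 2 isT.
  by case: (z %% 2)%Z => [[|[|k]]|k]; auto.
rewrite !even -modzDm.
by case: (mod2 x) => ->; case: (mod2 y) => ->.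
Qed.

Lemma dvd2z_sub (x y : int) : (2 %| x - y)%Z = ((2 %| x)%Z == (2 %| y)%Z).
Proof. by rewrite dvd2z_add rpredN. Qed.

(* The three possible classes (2 | m and p | m cannot both hold). *)
Definition cE : bool * bool := (true, false).
Definition cP : bool * bool := (false, true).
Definition cO : bool * bool := (false, false).

Definition patterns : seq class4 :=
  [:: (cE, cE, cE, cE); (cE, cP, cO, cO); (cE, cO, cP, cO);
      (cE, cO, cO, cO); (cP, cO, cE, cE); (cO, cO, cE, cE)].

(* Finite check: a = 2 | q1, b = 2 | q2, and c, d, e, f say whether p divides
   q1, q2, q1 + q2, q1 - q2; the parity of q1 +- q2 is a == b, no class is
   (even, divisible by p), and divisibility by p is closed under the linear
   relations between q1, q2, q1 + q2, q1 - q2. *)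
Lemma class4_pattern (a b c d e f : bool) :
  ~~ (a && c) -> ~~ (b && d) -> ~~ ((a == b) && e) -> ~~ ((a == b) && f) ->
  (c && d ==> e) -> (c && e ==> d) -> (d && e ==> c) ->
  (c && d ==> f) -> (c && f ==> d) -> (d && f ==> c) -> (e && f ==> c) ->
  has (mem patterns) (swaps ((a, c), (b, d), (a == b, e), (a == b, f))).
Proof. by case: a; case: b; case: c; case: d; case: e; case: f. Qed.

Lemma dvdz_half (p : nat) (x y : int) : odd p ->
  (p%:Z %| x + y)%Z -> (p%:Z %| x - y)%Z -> (p%:Z %| x)%Z.
Proof.
move=> odd_p dvd_sum dvd_diff; have := rpredD dvd_sum dvd_diff.
rewrite addrACA subrr addr0 -mulr2n -mulr_natr Gauss_dvdzl //.
by rewrite coprimezE /= coprime_sym coprime2n.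
Qed.

Lemma cls4_pattern (p : nat) (q1 q2 : int) : odd p ->
  ~~ ((2 * p)%:Z %| q1)%Z -> ~~ ((2 * p)%:Z %| q2)%Z ->
  ~~ ((2 * p)%:Z %| q1 + q2)%Z -> ~~ ((2 * p)%:Z %| q1 - q2)%Z ->
  has (mem patterns) (swaps (cls4 p q1 q2)).
Proof.
move=> odd_p adm1 adm2 adm3 adm4.
have := cls_not_both odd_p adm3; have := cls_not_both odd_p adm4.
rewrite /cls4 /cls /= dvd2z_sub dvd2z_add => not_both4 not_both3.
apply: class4_pattern; rewrite ?(cls_not_both odd_p adm1) ?(cls_not_both odd_p adm2) //;
  apply/implyP => /andP [].
- exact: rpredD.
- by move=> dvd1; rewrite (rpredDl _ dvd1).
- by move=> dvd2; rewrite (rpredDr _ dvd2).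
- exact: rpredB.
- by move=> dvd1; rewrite (rpredBl _ dvd1).
- by move=> dvd2; rewrite (rpredBr _ dvd2).
exact: dvdz_half.
Qed.

Lemma Sval_pattern (p : nat) (t : class4) :
  has (mem patterns) (swaps t) -> Sval p t \in [seq Sval p t' | t' <- patterns].
Proof.
case/hasP => t' t'_swap t'_pattern; rewrite -(Sval_swaps p t'_swap).
exact: map_f.
Qed.

Theorem proposition3p1p5 (p : nat) (hp : prime p) (hodd : odd p) :
  exists vs : seq ({poly algC} * {poly algC} * {poly algC}),
    (size vs <= 6)%N /\
    forall q1 q2 : int,
      ~~ ((2 * p)%:Z %| q1)%Z -> ~~ ((2 * p)%:Z %| q2)%Z ->
      ~~ ((2 * p)%:Z %| q1 + q2)%Z -> ~~ ((2 * p)%:Z %| q1 - q2)%Z ->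
      Smap p q1 q2 \in vs.
Proof.
exists [seq Sval p t | t <- patterns]; split; first by rewrite size_map.
move=> q1 q2 adm1 adm2 adm3 adm4; rewrite Smap_cls //.
exact/Sval_pattern/cls4_pattern.
Qed.
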